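(* In the mirror triangle method with inexact directional derivatives (see context), for every $u\in\mathbb{R}^n$ and $k\ge0$, with $R_k=\|u_k-u\|_L$ and $M_k=\|\nabla f(y_{k+1})\|_2$, $$A_{k+1}\mathbb{E}_{k+1}f(x_{k+1})-A_kf(x_k)+\mathbb{E}_{k+1}V(u,u_{k+1})-V(u,u_k)\le\alpha_{k+1}f(u)+\frac{A_{k+1}}L\delta^2+A_{k+1}\delta\frac{M_k}{L\sqrt n}+\alpha_{k+1}\delta\frac{\sqrt n}{\sqrt L}R_k.$$
   Context: $\mathbb{E}_{k+1}$ denotes conditional expectation over the randomness of iteration $k+1$ given iterations $1,\dots,k$. $f:\mathbb{R}^n\to\mathbb{R}$ is convex, differentiable, with $\|\nabla f(x)-\nabla f(y)\|_2\le L\|x-y\|_2$. $\|x\|_L^2=L\sum_ix_i^2$, $V(x,y)=\frac12\|x-y\|_L^2$. For each $k\ge0$, $e_{k+1}$ is a random vector on the Euclidean unit sphere such that, conditionally on previous iterations, $\mathbb{E}[e_{k+1}^ie_{k+1}^j]=0$ for $i\ne j$ and $\mathbb{E}[(e_{k+1}^i)^2]=\frac1n$; $\tilde\delta_{k+1}$ is random with $|\tilde\delta_{k+1}|\le\delta$; $\tilde\nabla f(y)=n(\langle\nabla f(y),e_{k+1}\rangle+\tilde\delta_{k+1})e_{k+1}$. Method: $x_0=u_0=y_0$, $\alpha_0=1-\frac1n$, $A_0=\alpha_0$; for $k\ge0$: $\alpha_{k+1}=\frac{k+2n}{2n^2}$, $A_{k+1}=A_k+\alpha_{k+1}$, $y_{k+1}=\frac{\alpha_{k+1}u_k+A_kx_k}{A_{k+1}}$,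 $u_{k+1}=\arg\min_{x\in\mathbb{R}^n}\{V(x,u_k)+\alpha_{k+1}\langle\tilde\nabla f(y_{k+1}),x\rangle\}$, $x_{k+1}=y_{k+1}+n\frac{\alpha_{k+1}}{A_{k+1}}(u_{k+1}-u_k)$. *)

From HB Require Import structures.
From mathcomp Require Import all_boot all_order all_algebra.
From mathcomp Require Import all_classical all_reals all_analysis.
Set Implicit Arguments. Unset Strict Implicit. Unset Printing Implicit Defensive.
Import Order.TTheory GRing.Theory Num.Theory.
Import numFieldNormedType.Exports.
Local Open Scope ring_scope.

Section MTM.
Variable R : realType.
Variable n : nat.

Definition dot (a b : 'rV[R]_n) : R := \sum_(i < n) a 0 i * b 0 i.
Definition norm2 (a : 'rV[R]_n) : R := Num.sqrt (\sum_(i < n) a 0 i ^+ 2).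
Definition normL (L : R) (a : 'rV[R]_n) : R := Num.sqrt (L * \sum_(i < n) a 0 i ^+ 2).
Definition Vdist (L : R) (x y : 'rV[R]_n) : R := 2^-1 * normL L (x - y) ^+ 2.

Definition alpha (k : nat) : R :=
  if k is k'.+1 then (k'%:R + 2 * n%:R) / (2 * n%:R ^+ 2) else 1 - n%:R^-1.
Definition Acoef (k : nat) : R := \sum_(j < k.+1) alpha j.

Definition ystep (k : nat) (x u : 'rV[R]_n) : 'rV[R]_n :=
  (Acoef k.+1)^-1 *: (alpha k.+1 *: u + Acoef k *: x).
(* inexact directional-derivative gradient estimate n(<grad f(y), e> + delta~) e *)
Definition gtilde (grad : 'rV[R]_n -> 'rV[R]_n) (y e : 'rV[R]_n) (d : R) : 'rV[R]_n :=
  (n%:R * (dot (grad y) e + d)) *: e.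
Definition is_mirror_step (L a : R) (g u u' : 'rV[R]_n) : Prop :=
  forall x, Vdist L u' u + a * dot g u' <= Vdist L x u + a * dot g x.
Definition xstep (k : nat) (y u u' : 'rV[R]_n) : 'rV[R]_n :=
  y + (n%:R * alpha k.+1 / Acoef k.+1) *: (u' - u).

(* A realization of the first k iterations of the method, driven by the
   realized random directions es (j+1) and errors ds (j+1), j < k. *)
Definition mtm_history (L delta : R) (grad : 'rV[R]_n -> 'rV[R]_n)
    (xs us es : nat -> 'rV[R]_n) (ds : nat -> R) (k : nat) : Prop :=
  xs 0%N = us 0%N /\
  forall j, (j < k)%N ->
    [/\ norm2 (es j.+1) = 1, `|ds j.+1| <= delta,
        is_mirror_step L (alpha j.+1)
          (gtilde grad (ystep j (xs j) (us j)) (es j.+1) (ds j.+1)) (us j) (us j.+1)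
      & xs j.+1 = xstep j (ystep j (xs j) (us j)) (us j) (us j.+1)].

End MTM.
Arguments alpha {R} n k.
Arguments Acoef {R} n k.

From HB Require Import structures.
From mathcomp Require Import all_boot all_order all_algebra.
From mathcomp Require Import all_classical all_reals all_analysis.
From mathcomp Require Import ring lra.
Import Order.TTheory GRing.Theory Num.Theory.
Import numFieldNormedType.Exports.

(* One step of the method is analysed for a fixed realisation of (e, delta~) and then
   averaged.  Since u_{k+1} is an explicit gradient step, both u_{k+1} - u_k and
   x_{k+1} - y_{k+1} are multiples of e; the descent lemma for f and the expansion of
   V(u, u_{k+1}) bound A_{k+1} f(x_{k+1}) + V(u, u_{k+1}) by A_{k+1} f(y_{k+1}) + V(u, u_k)
   plus a polynomial in p = <grad f(y_{k+1}), e> and r = <u - u_k, e>, the step size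
   condition n^2 alpha_{k+1}^2 <= A_{k+1} absorbing the quadratic terms.  In expectation
   E[p r] = <grad f(y_{k+1}), u - u_k>/n and E|p| <= |grad f(y_{k+1})|/sqrt n, and the
   gradient inequality at y_{k+1} = (alpha_{k+1} u_k + A_k x_k)/A_{k+1} bounds
   A_{k+1} f(y_{k+1}) + alpha_{k+1} <grad f(y_{k+1}), u - u_k> by A_k f(x_k) + alpha_{k+1} f(u). *)

Set Implicit Arguments.
Unset Strict Implicit.
Local Open Scope classical_set_scope.
Local Open Scope ring_scope.

Section EuclideanSpace.
Variables (R : realType) (n : nat).
Implicit Types (a b c : 'rV[R]_n) (t L : R).

Definition sqnorm a : R := \sum_(i < n) a 0 i ^+ 2.

Lemma sqnorm_ge0 a : 0 <= sqnorm a.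
Proof. by apply: sumr_ge0 => i _; exact: sqr_ge0. Qed.

Lemma sqnorm0 : sqnorm 0 = 0.
Proof. by rewrite /sqnorm big1 // => i _; rewrite mxE expr0n. Qed.

Lemma sqnorm_eq0 a : sqnorm a = 0 -> a = 0.
Proof.
move=> /psumr_eq0P a0; apply/rowP => i; rewrite mxE.
by apply/eqP; rewrite -sqrf_eq0; apply/eqP/a0 => // j _; exact: sqr_ge0.
Qed.

Lemma norm2_ge0 a : 0 <= norm2 a.
Proof. exact: sqrtr_ge0. Qed.

Lemma sqr_norm2 a : norm2 a ^+ 2 = sqnorm a.
Proof. by rewrite sqr_sqrtr // sqnorm_ge0. Qed.

Lemma dotC a b : dot a b = dot b a.
Proof. by apply: eq_bigr => i _; rewrite mulrC. Qed.

Lemma dot0l a : dot 0 a = 0.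
Proof. by rewrite /dot big1 // => i _; rewrite mxE mul0r. Qed.

Lemma dot0r a : dot a 0 = 0.
Proof. by rewrite dotC dot0l. Qed.

Lemma dotDl a b c : dot (a + b) c = dot a c + dot b c.
Proof. by rewrite /dot -big_split; apply: eq_bigr => i _; rewrite !mxE mulrDl. Qed.

Lemma dotBl a b c : dot (a - b) c = dot a c - dot b c.
Proof. by rewrite /dot -sumrB; apply: eq_bigr => i _; rewrite !mxE mulrBl. Qed.

Lemma dotZl t a b : dot (t *: a) b = t * dot a b.
Proof. by rewrite /dot mulr_sumr; apply: eq_bigr => i _; rewrite !mxE mulrA. Qed.

Lemma dotDr a b c : dot a (b + c) = dot a b + dot a c.
Proof. by rewrite dotC dotDl !(dotC a). Qed.

Lemma dotBr a b c : dot a (b - c) = dot a b - dot a c.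
Proof. by rewrite dotC dotBl !(dotC a). Qed.

Lemma dotZr t a b : dot a (t *: b) = t * dot a b.
Proof. by rewrite dotC dotZl dotC. Qed.

Lemma dotvv a : dot a a = sqnorm a.
Proof. by apply: eq_bigr => i _; rewrite expr2. Qed.

Lemma sqnormZ t a : sqnorm (t *: a) = t ^+ 2 * sqnorm a.
Proof. by rewrite /sqnorm mulr_sumr; apply: eq_bigr => i _; rewrite !mxE exprMn. Qed.

Lemma sqnormD a b : sqnorm (a + b) = sqnorm a + 2 * dot a b + sqnorm b.
Proof. by rewrite -!dotvv dotDl !dotDr (dotC b a); ring. Qed.

Lemma norm2Z t a : norm2 (t *: a) = `|t| * norm2 a.
Proof. by rewrite /norm2 -/(sqnorm _) sqnormZ sqrtrM ?sqr_ge0 // sqrtr_sqr. Qed.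

Lemma norm2N a : norm2 (- a) = norm2 a.
Proof. by rewrite -scaleN1r norm2Z normrN1 mul1r. Qed.

Lemma norm_dot_le a b : `|dot a b| <= norm2 a * norm2 b.
Proof.
have [->|a0] := eqVneq a 0; first by rewrite dot0l normr0 mulr_ge0 ?norm2_ge0.
have [->|b0] := eqVneq b 0; first by rewrite dot0r normr0 mulr_ge0 ?norm2_ge0.
have norm2_gt0 (v : 'rV[R]_n) : v != 0 -> 0 < norm2 v.
  move=> v0; rewrite /norm2 sqrtr_gt0 -/(sqnorm _) lt0r sqnorm_ge0 andbT.
  by apply: contra v0 => /eqP/sqnorm_eq0 ->.
set x := norm2 a; set y := norm2 b.
have xy0 : 0 < x * y by rewrite mulr_gt0 ?norm2_gt0.
have dot_le (c : 'rV[R]_n) : norm2 c = y -> dot a c <= x * y.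
  move=> cy; have := sqnorm_ge0 (y *: a - x *: c).
  rewrite -dotvv dotBl !dotBr !dotZl !dotZr (dotC c a) !dotvv -!sqr_norm2 cy -/x.
  by move=> ?; nra.
by rewrite ler_norml dot_le // andbT lerNl -(mulN1r (dot a b)) -dotZr scaleN1r dot_le
  ?norm2N.
Qed.

Lemma VdistE L a b : 0 <= L -> Vdist L a b = L / 2 * sqnorm (a - b).
Proof.
by move=> L0; rewrite /Vdist /normL -/(sqnorm _) sqr_sqrtr ?mulr_ge0 ?sqnorm_ge0 //; ring.
Qed.

Lemma normLE L a : 0 <= L -> normL L a = Num.sqrt L * norm2 a.
Proof. by move=> L0; rewrite /normL sqrtrM. Qed.

Lemma is_mirror_stepE L t (g u u' : 'rV[R]_n) : 0 < L ->
  is_mirror_step L t g u u' -> u' = u - (t / L) *: g.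
Proof.
move=> L0 min_u'; set u0 := u - (t / L) *: g.
have objE x : Vdist L x u + t * dot g x
    = L / 2 * sqnorm (x - u0) + (t * dot g u - t ^+ 2 / (2 * L) * sqnorm g).
  rewrite !VdistE ?ltW // (_ : x - u0 = (x - u) + (t / L) *: g); last first.
    by rewrite /u0 opprB addrA addrAC.
  rewrite (sqnormD (x - u)) sqnormZ dotZr dotBl (dotC x) (dotC u); field; exact: lt0r_neq0.
have := min_u' u0; rewrite !objE subrr sqnorm0 mulr0 lerD2r pmulr_rle0 ?divr_gt0 // => u'0.
by apply/eqP; rewrite -subr_eq0; apply/eqP/sqnorm_eq0/le_anti; rewrite u'0 sqnorm_ge0.
Qed.

End EuclideanSpace.

Lemma le_quadratic_increment (R : realType) (phi : R -> R) (c d : R) :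
  (forall t, derivable phi t 1) ->
  (forall t, 0 < t < 1 -> `|derive1 phi t - c| <= 2 * d * t) ->
  `|phi 1 - phi 0 - c| <= d.
Proof.
move=> dphi dphi_le.
have signed_le (s : R) : `|s| = 1 -> s * (phi 1 - phi 0 - c) <= d.
  move=> s1; pose psi := s \*: phi - (s * c) \*: @id R - d \*: (@id R) ^+ 2.
  have psi_der (t : R) : is_derive t 1 psi (s * derive1 phi t - s * c - 2 * d * t).
    have := derivableP (dphi t); rewrite -derive1E => phi_der.
    apply: is_derive_eq; rewrite /= expr1 /GRing.scale /=; ring.
  have psi_derivable (t : R) : derivable psi t 1 by case: (psi_der t).
  have : psi 1 <= psi 0.
    apply: (@ler0_derive1_le_cc _ psi 0 1); rewrite ?bound_itvE ?ler01 //.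
    - move=> t; rewrite in_itv /= => t01; rewrite derive1E derive_val.
      have := ler_norm (s * (derive1 phi t - c)); rewrite normrM s1 mul1r.
      have := dphi_le t t01; lra.
    - by apply: derivable_within_continuous => t _; exact: psi_derivable.
  by rewrite /psi !fctE /= expr1n expr0n /GRing.scale /=; lra.
rewrite ler_norml lerNl; apply/andP; split.
- by have := signed_le (-1) (normrN1 _); rewrite mulN1r.
- by have := signed_le 1 (normr1 _); rewrite mul1r.
Qed.

Lemma step_gain_le (R : realType) (beta g c p r s delta : R) :
  0 <= beta -> 0 <= c -> 0 <= g <= 1 -> `|s| <= delta ->
  - beta * (p + s) * p + (g + 1) / 2 * beta * (p + s) ^+ 2 + c * (p + s) * r
  <= beta * (delta ^+ 2 + delta * `|p|) + c * (p * r + delta * `|r|).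
Proof.
move=> beta0 c0 /andP[g0 g1] s_le.
have sp : s * p <= delta * `|p|.
  by apply: le_trans (ler_norm _) _; rewrite normrM ler_wpM2r.
have sr : s * r <= delta * `|r|.
  by apply: le_trans (ler_norm _) _; rewrite normrM ler_wpM2r.
have s2 : s ^+ 2 <= delta ^+ 2.
  by have := real_normK (num_real s); have := normr_ge0 s; nra.
have := ler_wpM2l beta0 sp; have := ler_wpM2l beta0 s2; have := ler_wpM2l c0 sr.
have : (g - 1) * (beta * (p + s) ^+ 2) <= 0.
  have : 0 <= beta * (p + s) ^+ 2 by rewrite mulr_ge0 ?sqr_ge0.
  nra.
lra.
Qed.

Section SmoothFunction.
Variables (R : realType) (n : nat) (f : 'rV[R]_n -> R) (grad : 'rV[R]_n -> 'rV[R]_n).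
Variable L : R.
Hypothesis f_diff : forall y, differentiable f y /\ forall h, 'd f y h = dot (grad y) h.
Hypothesis grad_lip : forall x y, norm2 (grad x - grad y) <= L * norm2 (x - y).
Implicit Types (x y z h : 'rV[R]_n).

Lemma is_derive_along y h (t : R) :
  is_derive t 1 (fun s : R => f (y + s *: h)) (dot (grad (y + t *: h)) h).
Proof.
have quotE : (fun s : R => s^-1 *: (((fun s => f (y + s *: h)) \o shift t) (s *: 1)
                                     - f (y + t *: h)))
    = (fun s : R => s^-1 *: ((f \o shift (y + t *: h)) (s *: h) - f (y + t *: h))).
  by apply: funext => s /=; rewrite [s%:A]mulr1 scalerDl addrCA.
have [fd fdE] := f_diff (y + t *: h).
rewrite -fdE -deriveE // (_ : 'D_h f _ = 'D_1 (fun s : R => f (y + s *: h)) t).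
  by apply: derivableP; rewrite /derivable quotE; exact: diff_derivable.
by rewrite /derive quotE.
Qed.

Lemma linearization_error_le y h :
  `|f (y + h) - f y - dot (grad y) h| <= L / 2 * sqnorm h.
Proof.
have := @le_quadratic_increment _ (fun s => f (y + s *: h)) (dot (grad y) h) (L / 2 * sqnorm h).
rewrite scale1r scale0r addr0; apply.
  by move=> t; case: (is_derive_along y h t).
move=> t /andP[t0 _].
rewrite derive1E (derive_val (is_derive := is_derive_along y h t)) -dotBl.
apply: le_trans (norm_dot_le _ _) _.
have lip : norm2 (grad (y + t *: h) - grad y) <= L * (t * norm2 h).
  by have := grad_lip (y + t *: h) y; rewrite addrAC subrr add0r norm2Z ger0_norm // ltW.
apply: le_trans (ler_wpM2r (norm2_ge0 h) lip) _.
by rewrite -sqr_norm2 le_eqVlt; apply/orP; left; apply/eqP; field.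
Qed.

Lemma descent_le y h : f (y + h) <= f y + dot (grad y) h + L / 2 * sqnorm h.
Proof. by have /ler_normlP[_] := linearization_error_le y h; lra. Qed.

Lemma mirror_step_le (y uk u e u1 x1 : 'rV[R]_n) (s delta a A : R) :
  0 < L -> 0 < A -> 0 <= a -> (n%:R * a) ^+ 2 <= A -> norm2 e = 1 -> `|s| <= delta ->
  u1 = uk - (a / L) *: gtilde grad y e s -> x1 = y + (n%:R * a / A) *: (u1 - uk) ->
  A * f x1 + Vdist L u u1
  <= A * f y + Vdist L u uk
     + (n%:R * a) ^+ 2 / L * (delta ^+ 2 + delta * `|dot (grad y) e|)
     + n%:R * a * (dot (grad y) e * dot (u - uk) e + delta * `|dot (u - uk) e|).
Proof.
move=> L0 A0 a0 aA e1 s_le u1_def ->.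
set c := n%:R * a; set p := dot (grad y) e; set r := dot (u - uk) e; set q := p + s.
have e2 : sqnorm e = 1 by rewrite -sqr_norm2 e1 expr1n.
have u1E : u1 - uk = (- (c / L * q)) *: e.
  rewrite u1_def /gtilde addrAC subrr add0r scalerA scaleNr /c /q -/p.
  by congr (- (_ *: e)); ring.
have f_le : A * f (y + (c / A) *: (u1 - uk))
    <= A * f y - c ^+ 2 / L * q * p + c ^+ 2 / A * (c ^+ 2 / L) / 2 * q ^+ 2.
  apply: le_trans (ler_wpM2l (ltW A0) (descent_le _ _)) _.
  rewrite u1E scalerA dotZr sqnormZ e2 -/p le_eqVlt; apply/orP; left; apply/eqP.
  by field; rewrite !gt_eqF.
have VE : Vdist L u u1 = Vdist L u uk + c * q * r + c ^+ 2 / L / 2 * q ^+ 2.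
  rewrite !VdistE ?ltW // (_ : u - u1 = (u - uk) + (c / L * q) *: e).
    by rewrite sqnormD dotZr sqnormZ e2 -/r; field; rewrite gt_eqF.
  by rewrite -[in RHS](opprK (c / L * q)) scaleNr -u1E opprB addrA subrK.
rewrite VE -/c.
set beta := c ^+ 2 / L; set g := c ^+ 2 / A.
have g01 : 0 <= g <= 1.
  by rewrite /g divr_ge0 ?sqr_ge0 ?(ltW A0) //= ler_pdivrMr // mul1r.
have c0 : 0 <= c by rewrite mulr_ge0.
have beta0 : 0 <= beta by rewrite divr_ge0 ?sqr_ge0 ?(ltW L0).
have := step_gain_le p r beta0 c0 g01 s_le.
by move: f_le; rewrite -/g -/beta /q; lra.
Qed.

Hypothesis f_convex : forall x y (t : R), 0 <= t <= 1 ->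
  f (t *: x + (1 - t) *: y) <= t * f x + (1 - t) * f y.

Lemma convex_gradient_le y z : 0 <= L -> f y + dot (grad y) (z - y) <= f z.
Proof.
move=> L0; set K := L / 2 * sqnorm (z - y).
have K0 : 0 <= K by rewrite mulr_ge0 ?divr_ge0 ?sqnorm_ge0.
have slope_le (t : R) : 0 < t <= 1 -> dot (grad y) (z - y) <= f z - f y + K * t.
  move=> /andP[t0 t1]; have := f_convex z y (t := t); rewrite ltW //= t1 => /(_ isT).
  rewrite (_ : t *: z + (1 - t) *: y = y + t *: (z - y)); last first.
    by rewrite scalerBl scale1r scalerBr addrCA.
  have /ler_normlP[low _] := linearization_error_le y (t *: (z - y)).
  rewrite dotZr sqnormZ /K in low * => convex_t.
  by rewrite -(ler_pM2l t0); lra.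
apply/ler_addgt0Pr => eps eps0.
pose t := eps / (eps + K).
have epsK0 : 0 < eps + K by lra.
have t0 : 0 < t by rewrite divr_gt0.
have t1 : t <= 1 by rewrite ler_pdivrMr // mul1r; lra.
have Kt : K * t <= eps by rewrite mulrA ler_pdivrMr // mulrC ler_pM2l //; lra.
by have := slope_le t; rewrite t0 t1 => /(_ isT); lra.
Qed.

Lemma convex_combination_gradient_le (a b A : R) x v y z : 0 <= L ->
  0 <= a -> 0 <= b -> A = a + b -> A *: y = a *: v + b *: x ->
  A * f y + a * dot (grad y) (z - v) <= b * f x + a * f z.
Proof.
move=> L0 a0 b0 AE yE.
have gy : A * dot (grad y) y = a * dot (grad y) v + b * dot (grad y) x.
  by rewrite -dotZr yE dotDr !dotZr.
have := ler_wpM2l b0 (convex_gradient_le y x L0).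
have := ler_wpM2l a0 (convex_gradient_le y z L0).
rewrite !dotBr AE in gy *; nra.
Qed.

End SmoothFunction.

Section StepSizes.
Variables (R : realType) (n : nat).
Hypothesis n_gt0 : (0 < n)%N.

Let n_pos : (0 : R) < n%:R. Proof. by rewrite ltr0n. Qed.

Lemma AcoefS k : Acoef (R:=R) n k.+1 = Acoef n k + alpha n k.+1.
Proof. by rewrite /Acoef big_ord_recr. Qed.

Lemma alpha_ge0 k : 0 <= alpha (R:=R) n k.
Proof.
case: k => [|k] /=.
  by rewrite subr_ge0 invf_le1 // ler1n.
by rewrite divr_ge0 ?mulr_ge0 ?exprn_ge0 ?addr_ge0 // ltW.
Qed.

Lemma Acoef_ge0 k : 0 <= Acoef (R:=R) n k.
Proof. by apply: sumr_ge0 => j _; exact: alpha_ge0. Qed.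

Lemma Acoef_gt0 k : 0 < Acoef (R:=R) n k.+1.
Proof.
by rewrite AcoefS ltr_wpDl ?Acoef_ge0 //= divr_gt0 ?ltr_wpDl ?mulr_gt0.
Qed.

Lemma AcoefE m : 4 * n%:R ^+ 2 * Acoef (R:=R) n m
  = 4 * n%:R ^+ 2 - 4 * n%:R + m%:R * (m%:R - 1) + 4 * n%:R * m%:R.
Proof.
have n0 : (n%:R : R) != 0 by rewrite gt_eqF.
elim: m => [|m IH]; first by rewrite /Acoef big_ord1 /=; field.
by rewrite AcoefS mulrDr IH /= -(@natr1 R m); field.
Qed.

Lemma sqr_alpha_le_Acoef k : (n%:R * alpha (R:=R) n k.+1) ^+ 2 <= Acoef n k.+1.
Proof.
have n4 : 0 < 4 * (n%:R : R) ^+ 2 by rewrite mulr_gt0 // exprn_gt0.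
rewrite -(ler_pM2l n4) AcoefE /=.
have -> : 4 * n%:R ^+ 2 * (n%:R * ((k%:R + 2 * n%:R) / (2 * n%:R ^+ 2))) ^+ 2
   = (k%:R + 2 * n%:R) ^+ 2 :> R by field; rewrite gt_eqF.
by rewrite -(@natr1 R k); have := ler0n R k; nra.
Qed.

End StepSizes.

Lemma le_integral_nonmeasurable (R : realType) (d : measure_display)
    (T : measurableType d) (mu : {measure set T -> \bar R}) (g h : T -> \bar R) :
  (forall w, g w <= h w)%E -> (\int[mu]_w g w <= \int[mu]_w h w)%E.
Proof.
move=> gh.
(* the integral of a nonnegative function is a supremum over the simple functions below it *)
have ge0_le (g' h' : T -> \bar R) : (forall w, 0 <= g' w)%E -> (forall w, g' w <= h' w)%E ->
    (\int[mu]_w g' w <= \int[mu]_w h' w)%E.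
  move=> g'0 g'h'; have h'0 w : (0 <= h' w)%E := le_trans (g'0 w) (g'h' w).
  rewrite !ge0_integralTE //; apply: ereal_sup_le => _ [s s_le <-]; exists s => //=.
  by move=> w; exact: le_trans (s_le w) (g'h' w).
rewrite (integralE _ _ g) (integralE _ _ h); apply: leeB; apply: ge0_le => w.
- exact: funepos_ge0.
- by apply: (@funepos_le _ _ setT) => //; rewrite inE.
- exact: funeneg_ge0.
- by apply: (@funeneg_le _ _ setT) => //; rewrite inE.
Qed.

Section BoundedRandomVariables.
Context (R : realType) (d : measure_display) (T : measurableType d).
Implicit Types (g h : T -> R).

Definition bounded_rv h := measurable_fun setT h /\ exists M, forall w, `|h w| <= M.

Lemma bounded_rv_cst c : bounded_rv (fun=> c).
Proof. by split; [exact: measurable_cst | exists `|c|]. Qed.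

Lemma bounded_rvD g h : bounded_rv g -> bounded_rv h -> bounded_rv (fun w => g w + h w).
Proof.
move=> [mg [M gM]] [mh [N hN]]; split; first exact: measurable_realfun.measurable_funD.
by exists (M + N) => w; apply: le_trans (ler_normD _ _) _; exact: lerD.
Qed.

Lemma bounded_rvM g h : bounded_rv g -> bounded_rv h -> bounded_rv (fun w => g w * h w).
Proof.
move=> [mg [M gM]] [mh [N hN]]; split; first exact: measurable_realfun.measurable_funM.
by exists (M * N) => w; rewrite normrM; apply: ler_pM.
Qed.

Lemma bounded_rv_norm h : bounded_rv h -> bounded_rv (fun w => `|h w|).
Proof.
move=> [mh [M hM]]; split; first exact: measurableT_comp.
by exists M => w; rewrite normr_id.
Qed.

Lemma bounded_rv_sum (I : Type) (s : seq I) (F : I -> T -> R) :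
  (forall i, bounded_rv (F i)) -> bounded_rv (fun w => \sum_(i <- s) F i w).
Proof.
move=> bF; elim: s => [|i s IH].
  by under [X in bounded_rv X]funext do rewrite big_nil; exact: bounded_rv_cst.
by under [X in bounded_rv X]funext do rewrite big_cons; exact: bounded_rvD.
Qed.

End BoundedRandomVariables.

Ltac bounded_rv_closure := repeat first
  [ assumption | apply: bounded_rv_cst | apply: bounded_rvD | apply: bounded_rvM
  | apply: bounded_rv_norm ].

Section Expectation.
Context (R : realType) (d : measure_display) (T : measurableType d).
Variable P : probability T R.

Lemma bounded_rv_integrable h : bounded_rv h -> P.-integrable setT (EFin \o h).
Proof.
move=> [mh [M hM]]; apply: measurable_bounded_integrable => //.
  exact: (le_lt_trans (probability_le1 P measurableT) (ltry 1)).
exists M; split; first exact: num_real.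
by move=> M' M'M w _; apply: le_trans (hM w) (ltW M'M).
Qed.

Lemma bounded_rv_integralE h :
  bounded_rv h -> (\int[P]_w (h w)%:E = (\int[P]_w h w)%:E)%E.
Proof.
move=> /bounded_rv_integrable hi; rewrite /Rintegral fineK //.
exact: integrable_fin_num.
Qed.

Lemma Rintegral_probability_cst c : \int[P]_w c = c.
Proof.
by rewrite Rintegral_cst // (congr1 fine (probability_setT P)) mulr1.
Qed.

Lemma Rintegral_sum (I : Type) (s : seq I) (F : I -> T -> R) :
  (forall i, bounded_rv (F i)) ->
  \int[P]_w (\sum_(i <- s) F i w) = \sum_(i <- s) \int[P]_w F i w.
Proof.
move=> bF; elim: s => [|i s IH].
  by under eq_Rintegral do rewrite big_nil; rewrite big_nil Rintegral_probability_cst.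
under eq_Rintegral do rewrite big_cons.
rewrite big_cons RintegralD ?IH //; apply: bounded_rv_integrable => //.
exact: bounded_rv_sum.
Qed.

Lemma integral_scaleD_le (F V B : T -> R) (A : R) : 0 < A ->
  bounded_rv V -> bounded_rv B -> (forall w, A * F w + V w <= B w) ->
  (A%:E * \int[P]_w (F w)%:E + \int[P]_w (V w)%:E <= (\int[P]_w B w)%:E)%E.
Proof.
move=> A0 bV bB FVB.
(* [F] need not be measurable: bound it by the bounded variable [(B - V) / A] *)
pose G w := A^-1 * B w + - A^-1 * V w.
have bG : bounded_rv G by rewrite /G; bounded_rv_closure.
have F_le w : ((F w)%:E <= (G w)%:E)%E.
  rewrite lee_fin /G -(ler_pM2l A0) mulrDr !mulrA mulrN mulfV ?gt_eqF // !mul1r.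
  by have := FVB w; lra.
apply: le_trans (leeD2r _ (lee_wpmul2l _ (le_integral_nonmeasurable _ F_le))) _.
  by rewrite lee_fin ltW.
rewrite !bounded_rv_integralE // -EFinM -EFinD lee_fin /G.
rewrite RintegralD ?RintegralZl //; try by apply: bounded_rv_integrable; bounded_rv_closure.
by rewrite mulrDr !mulrA mulrN mulfV ?gt_eqF // mul1r mulN1r addrNK.
Qed.

Lemma probability_inhabited : exists w : T, True.
Proof.
apply/not_existsP => T0; have := probability_setT P.
rewrite (_ : [set: T] = set0) ?measure0; last by apply/seteqP; split => // w; have := T0 w.
by move=> /esym/eqP; rewrite eqe oner_eq0.
Qed.

End Expectation.

Section RandomDirection.
Context (R : realType) (d : measure_display) (T : measurableType d).
Variables (P : probability T R) (n : nat) (e : T -> 'rV[R]_n).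
Hypothesis e_meas : forall i : 'I_n, measurable_fun setT (fun w => e w 0 i).
Hypothesis e_unit : forall w, norm2 (e w) = 1.
Hypothesis e_orth : forall i j : 'I_n, i != j ->
  (\int[P]_w (e w 0 i * e w 0 j)%:E = 0)%E.
Hypothesis e_sqr : forall i : 'I_n, (\int[P]_w (e w 0 i ^+ 2)%:E = (n%:R^-1)%:E)%E.
Implicit Types (b v : 'rV[R]_n).

Lemma sqnorm_unit w : sqnorm (e w) = 1.
Proof. by rewrite -sqr_norm2 e_unit expr1n. Qed.

Lemma bounded_rv_coord i : bounded_rv (fun w => e w 0 i).
Proof.
split => //; exists 1 => w.
have ei2 : e w 0 i ^+ 2 <= 1.
  rewrite -(sqnorm_unit w) /sqnorm (bigD1 i) //= lerDl.
  by apply: sumr_ge0 => j _; exact: sqr_ge0.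
by have := normr_ge0 (e w 0 i); rewrite -real_normK ?num_real // in ei2; nra.
Qed.

Lemma bounded_rv_dot b : bounded_rv (fun w => dot b (e w)).
Proof. by apply: bounded_rv_sum => i; bounded_rv_closure; exact: bounded_rv_coord. Qed.

Lemma bounded_rv_sqnorm_along v (lam : T -> R) :
  bounded_rv lam -> bounded_rv (fun w => sqnorm (v + lam w *: e w)).
Proof.
move=> blam; apply: bounded_rv_sum => i.
under [X in bounded_rv X]funext do rewrite !mxE.
by bounded_rv_closure; exact: bounded_rv_coord.
Qed.

Lemma expectation_coord_mul i j :
  \int[P]_w (e w 0 i * e w 0 j) = (i == j)%:R / n%:R.
Proof.
have [<-|ij] := eqVneq i j; last by rewrite mul0r /Rintegral e_orth.
by under eq_Rintegral do rewrite -expr2; rewrite /Rintegral e_sqr mul1r.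
Qed.

Lemma expectation_dot_mul b v :
  \int[P]_w (dot b (e w) * dot v (e w)) = dot b v / n%:R.
Proof.
have bij i j : bounded_rv (fun w => b 0 i * v 0 j * (e w 0 i * e w 0 j)).
  by bounded_rv_closure; exact: bounded_rv_coord.
have dotM w : dot b (e w) * dot v (e w)
    = \sum_(i < n) \sum_(j < n) b 0 i * v 0 j * (e w 0 i * e w 0 j).
  rewrite /dot mulr_suml; apply: eq_bigr => i _; rewrite mulr_sumr.
  by apply: eq_bigr => j _; rewrite mulrACA.
under eq_Rintegral do rewrite dotM.
rewrite /dot mulr_suml Rintegral_sum => [|i]; last exact: bounded_rv_sum.
apply: eq_bigr => i _; rewrite Rintegral_sum // (bigD1 i) //= big1 => [|j ji].
  rewrite addr0 RintegralZl ?expectation_coord_mul ?eqxx ?mul1r //.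
  by apply: bounded_rv_integrable; bounded_rv_closure; exact: bounded_rv_coord.
rewrite RintegralZl ?expectation_coord_mul 1?eq_sym ?(negbTE ji) ?mul0r ?mulr0 //.
by apply: bounded_rv_integrable; bounded_rv_closure; exact: bounded_rv_coord.
Qed.

Lemma expectation_norm_dot_le b : (0 < n)%N ->
  \int[P]_w `|dot b (e w)| <= norm2 b / Num.sqrt n%:R.
Proof.
move=> n_gt0; have sqrt_n : 0 < Num.sqrt (n%:R : R) by rewrite sqrtr_gt0 ltr0n.
have [->|b0] := eqVneq b 0.
  under eq_Rintegral do rewrite dot0l normr0.
  by rewrite Rintegral_probability_cst divr_ge0 ?norm2_ge0 ?ltW.
set sigma := norm2 b / Num.sqrt n%:R.
have sigma0 : 0 < sigma.
  rewrite divr_gt0 // /norm2 sqrtr_gt0 -/(sqnorm _) lt0r sqnorm_ge0 andbT.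
  by apply: contra b0 => /eqP/sqnorm_eq0 ->.
have sigma2 : sigma ^+ 2 = dot b b / n%:R.
  by rewrite expr_div_n sqr_norm2 sqr_sqrtr ?ler0n // dotvv.
(* AM-GM with weight [sigma], chosen so that [sigma^2 = E[p^2]] *)
have amgm (p : R) : `|p| <= (2 * sigma)^-1 * (p * p) + sigma / 2.
  have -> : (2 * sigma)^-1 * (p * p) + sigma / 2 = (p ^+ 2 + sigma ^+ 2) / (2 * sigma).
    by field; rewrite gt_eqF.
  rewrite ler_pdivlMr; last by rewrite mulr_gt0.
  by have := sqr_ge0 (`|p| - sigma); have := real_normK (num_real p); lra.
have bp := bounded_rv_dot b.
apply: le_trans (le_Rintegral _ _ _ (fun w _ => amgm (dot b (e w)))) _ => //.
- exact/bounded_rv_integrable/bounded_rv_norm.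
- by apply: bounded_rv_integrable; bounded_rv_closure.
rewrite RintegralD ?RintegralZl ?expectation_dot_mul ?Rintegral_probability_cst //;
  try by apply: bounded_rv_integrable; bounded_rv_closure.
by rewrite -sigma2 le_eqVlt; apply/orP; left; apply/eqP; field; rewrite gt_eqF.
Qed.

Lemma expectation_gain_le b v (beta a delta : R) : (0 < n)%N ->
  0 <= beta -> 0 <= a -> 0 <= delta ->
  \int[P]_w (beta * delta * `|dot b (e w)| + n%:R * a * (dot b (e w) * dot v (e w))
             + n%:R * a * delta * `|dot v (e w)|)
  <= beta * delta * (norm2 b / Num.sqrt n%:R) + a * dot b v
     + a * delta * (Num.sqrt n%:R * norm2 v).
Proof.
move=> n_gt0 beta0 a0 delta0.
have sqrt_n : 0 < Num.sqrt (n%:R : R) by rewrite sqrtr_gt0 ltr0n.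
have bb := bounded_rv_dot b; have bv := bounded_rv_dot v.
rewrite !RintegralD //; try by apply: bounded_rv_integrable; bounded_rv_closure.
rewrite !RintegralZl ?expectation_dot_mul //;
  try by apply: bounded_rv_integrable; bounded_rv_closure.
have na0 : 0 <= n%:R * a * delta by rewrite !mulr_ge0.
apply: lerD; first apply: lerD.
- by apply: ler_wpM2l; [rewrite mulr_ge0 | exact: expectation_norm_dot_le].
- by rewrite le_eqVlt; apply/orP; left; apply/eqP; field; rewrite gt_eqF ?ltr0n.
- apply: le_trans (ler_wpM2l na0 (expectation_norm_dot_le v n_gt0)) _.
  rewrite -{1}(sqr_sqrtr (ler0n R n)) le_eqVlt; apply/orP; left; apply/eqP.
  by field; rewrite gt_eqF.
Qed.

End RandomDirection.

Section ExpectedStep.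
Context (R : realType) (d : measure_display) (T : measurableType d).
Variables (P : probability T R) (n : nat) (f : 'rV[R]_n -> R) (grad : 'rV[R]_n -> 'rV[R]_n).
Variables (L delta : R) (e : T -> 'rV[R]_n) (s : T -> R).
Hypothesis n_gt0 : (0 < n)%N.
Hypothesis L_gt0 : 0 < L.
Hypothesis f_diff : forall y, differentiable f y /\ forall h, 'd f y h = dot (grad y) h.
Hypothesis grad_lip : forall x y, norm2 (grad x - grad y) <= L * norm2 (x - y).
Hypothesis e_meas : forall i : 'I_n, measurable_fun setT (fun w => e w 0 i).
Hypothesis e_unit : forall w, norm2 (e w) = 1.
Hypothesis e_orth : forall i j : 'I_n, i != j ->
  (\int[P]_w (e w 0 i * e w 0 j)%:E = 0)%E.
Hypothesis e_sqr : forall i : 'I_n, (\int[P]_w (e w 0 i ^+ 2)%:E = (n%:R^-1)%:E)%E.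
Hypothesis s_meas : measurable_fun setT s.
Hypothesis s_le : forall w, `|s w| <= delta.
Hypothesis delta_ge0 : 0 <= delta.

Lemma expected_mirror_step_le (y uk u : 'rV[R]_n) (u1 x1 : T -> 'rV[R]_n) (a A : R) :
  0 < A -> 0 <= a -> (n%:R * a) ^+ 2 <= A ->
  (forall w, u1 w = uk - (a / L) *: gtilde grad y (e w) (s w)) ->
  (forall w, x1 w = y + (n%:R * a / A) *: (u1 w - uk)) ->
  (A%:E * \int[P]_w (f (x1 w))%:E + \int[P]_w (Vdist L u (u1 w))%:E
   <= (A * f y + Vdist L u uk + A / L * delta ^+ 2
       + A * delta * (norm2 (grad y) / (L * Num.sqrt n%:R)) + a * dot (grad y) (u - uk)
       + a * delta * (Num.sqrt n%:R / Num.sqrt L) * normL L (uk - u))%:E)%E.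
Proof.
move=> A0 a0 aA u1E x1E.
set G := grad y; set c := n%:R * a; set beta := c ^+ 2 / L.
pose p w := dot G (e w); pose r w := dot (u - uk) (e w).
have bp : bounded_rv p := bounded_rv_dot e_meas e_unit G.
have br : bounded_rv r := bounded_rv_dot e_meas e_unit (u - uk).
have bs : bounded_rv s by split; last exists delta.
have bV : bounded_rv (fun w => Vdist L u (u1 w)).
  have -> : (fun w => Vdist L u (u1 w))
      = (fun w => L / 2 * sqnorm ((u - uk) + (a / L * (n%:R * (p w + s w))) *: e w)).
    apply: funext => w; rewrite VdistE ?(ltW L_gt0) // u1E /gtilde scalerA.
    by rewrite opprB addrCA [_ + (u - uk)]addrC.
  by bounded_rv_closure; apply: (bounded_rv_sqnorm_along e_meas e_unit); bounded_rv_closure.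
pose gain w := beta * delta * `|p w| + c * (p w * r w) + c * delta * `|r w|.
have bgain : bounded_rv gain by rewrite /gain; bounded_rv_closure.
have bK : bounded_rv (fun w => A * f y + Vdist L u uk + beta * delta ^+ 2 + gain w).
  by bounded_rv_closure.
apply: le_trans (integral_scaleD_le P A0 bV bK _) _.
  move=> w; apply: le_trans (mirror_step_le f_diff grad_lip u L_gt0 A0 a0 aA
    (e_unit w) (s_le w) (u1E w) (x1E w)) _.
  by rewrite le_eqVlt; apply/orP; left; apply/eqP; rewrite /gain -/c -/beta /p /r; ring.
rewrite lee_fin RintegralD ?Rintegral_probability_cst //;
  try by apply: bounded_rv_integrable; bounded_rv_closure.
have beta0 : 0 <= beta by rewrite divr_ge0 ?sqr_ge0 ?(ltW L_gt0).
have := expectation_gain_le e_meas e_unit e_orth e_sqr G (u - uk) n_gt0 beta0 a0 delta_ge0.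
rewrite -/(gain) /=.
set sn := Num.sqrt n%:R; set sL := Num.sqrt L.
have sn0 : 0 < sn by rewrite sqrtr_gt0 ltr0n.
have sL0 : 0 < sL by rewrite sqrtr_gt0.
have beta_le : beta <= A / L by rewrite ler_pM2r ?invr_gt0.
have gainG : beta * delta * (norm2 G / sn) <= A * delta * (norm2 G / (L * sn)).
  rewrite (_ : A * delta * _ = A / L * delta * (norm2 G / sn)); last first.
    by field; rewrite !gt_eqF.
  by rewrite ler_wpM2r ?divr_ge0 ?norm2_ge0 ?(ltW sn0) // ler_wpM2r.
have gainV : sn * norm2 (u - uk) = sn / sL * normL L (uk - u).
  rewrite normLE ?(ltW L_gt0) // -/sL -opprB norm2N; field; exact: lt0r_neq0.
have : beta * delta ^+ 2 <= A / L * delta ^+ 2 by rewrite ler_wpM2r ?sqr_ge0.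
by rewrite gainV; lra.
Qed.

End ExpectedStep.
Theorem lemma14 (R : realType) (n : nat)
  (f : 'rV[R]_n -> R) (grad : 'rV[R]_n -> 'rV[R]_n) (L delta : R)
  (d : measure_display) (T : measurableType d) (P : probability T R)
  (xs us es : nat -> 'rV[R]_n) (ds : nat -> R) (k : nat)
  (e : T -> 'rV[R]_n) (dt : T -> R) (u1 x1 : T -> 'rV[R]_n) (u : 'rV[R]_n) :
  (0 < n)%N -> 0 < L ->
  (* f convex *)
  (forall (x y : 'rV[R]_n) (t : R), 0 <= t <= 1 ->
      f (t *: x + (1 - t) *: y) <= t * f x + (1 - t) * f y) ->
  (* f differentiable with gradient grad *)
  (forall y : 'rV[R]_n, differentiable f y /\
      forall h : 'rV[R]_n, 'd f y h = dot (grad y) h) ->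
  (* L-Lipschitz gradient w.r.t. the Euclidean norm *)
  (forall x y : 'rV[R]_n, norm2 (grad x - grad y) <= L * norm2 (x - y)) ->
  (* iterations 1..k have been realized *)
  mtm_history L delta grad xs us es ds k ->
  (* conditional law of (e_{k+1}, delta~_{k+1}) given the past *)
  (forall i : 'I_n, measurable_fun setT (fun w => e w 0 i)) ->
  measurable_fun setT dt ->
  (forall w, norm2 (e w) = 1) ->
  (forall w, `|dt w| <= delta) ->
  (forall i j : 'I_n, i != j -> (\int[P]_w (e w 0 i * e w 0 j)%:E = 0)%E) ->
  (forall i : 'I_n, (\int[P]_w (e w 0 i ^+ 2)%:E = (n%:R^-1)%:E)%E) ->
  (* iteration k+1 *)
  (forall w, is_mirror_step L (alpha n k.+1)
       (gtilde grad (ystep k (xs k) (us k)) (e w) (dt w)) (us k) (u1 w)) ->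
  (forall w, x1 w = xstep k (ystep k (xs k) (us k)) (us k) (u1 w)) ->
  ((Acoef n k.+1)%:E * \int[P]_w (f (x1 w))%:E - (Acoef n k * f (xs k))%:E
     + \int[P]_w (Vdist L u (u1 w))%:E - (Vdist L u (us k))%:E
   <= (alpha n k.+1 * f u + Acoef n k.+1 / L * delta ^+ 2
       + Acoef n k.+1 * delta * (norm2 (grad (ystep k (xs k) (us k))) / (L * Num.sqrt n%:R))
       + alpha n k.+1 * delta * (Num.sqrt n%:R / Num.sqrt L) * normL L (us k - u))%:E)%E.
Proof.
move=> n_gt0 L_gt0 f_convex f_diff grad_lip _ e_meas dt_meas e_unit dt_le e_orth e_sqr
  u1_min x1E.
set y := ystep k (xs k) (us k); set a := alpha n k.+1.
set A := Acoef n k.+1; set A' := Acoef n k.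
have u1E w : u1 w = us k - (a / L) *: gtilde grad y (e w) (dt w).
  exact: is_mirror_stepE L_gt0 (u1_min w).
have delta0 : 0 <= delta.
  by have [w _] := probability_inhabited P; exact: le_trans (normr_ge0 _) (dt_le w).
have step := expected_mirror_step_le n_gt0 L_gt0 f_diff grad_lip e_meas e_unit e_orth e_sqr
  dt_meas dt_le delta0 u (Acoef_gt0 R n_gt0 k) (alpha_ge0 R n_gt0 k.+1) (sqr_alpha_le_Acoef R n_gt0 k)
  u1E x1E.
have convex : A * f y + a * dot (grad y) (u - us k) <= A' * f (xs k) + a * f u.
  apply: (convex_combination_gradient_le f_diff grad_lip f_convex u (ltW L_gt0)).
  - exact: alpha_ge0.
  - exact: Acoef_ge0.
  - by rewrite /A AcoefS addrC.
  - by rewrite /y /ystep scalerA mulfV ?scale1r // gt_eqF // Acoef_gt0.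
rewrite [X in (X + _)%E]addeAC; apply: le_trans (leeD2r _ (leeD2r _ step)) _.
by rewrite -!EFinN -!EFinD lee_fin -/a -/A; lra.
Qed.
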